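(* Let $V$ be an $n$-dimensional vector space over a field $\mathbb{F}$ with an alternating bilinear form $\mathsf{s}$ of maximal rank, and let $\Gamma=\Gamma(V)$. For every hyperbolic basis $\{e_i,f_j\mid 1\le i\le r+d,\ 1\le j\le r\}$ of $V$ (where $2r=\mathrm{rank}(V)$, $d=\dim\mathrm{Rad}(V)$), setting $h_{2i-1}=e_i$ ($1\le i\le r+d$), $h_{2j}=f_j$ ($1\le j\le r$) and $C_l=\langle h_1,\dots,h_l\rangle$, the collection $\{C_l\}_{l=1}^{n-1}$ is a chamber of $\Gamma$. Conversely, every chamber of $\Gamma$ arises in this way from some (not necessarily unique) hyperbolic basis of $V$.
   Context: $U^\perp=\{v\in V:\mathsf{s}(u,v)=0\ \forall u\in U\}$, $\mathrm{Rad}(U)=U\cap U^\perp$, $\mathrm{rank}(U)=\dim U-\dim\mathrm{Rad}(U)$; maximal rank means $\dim\mathrm{Rad}(V)\le1$. A hyperbolic basis of $V$ is a basis $\{e_i,f_j\mid 1\le i\le r+d, 1\le j\le r\}$ with $\mathsf{s}(e_i,e_j)=\mathsf{s}(f_i,f_j)=0$ and $\mathsf{s}(e_i,f_j)=\delta_{ij}$ for $1\le i,j\le r$, and $\{e_{r+i}\}_{1\le i\le d}$ a basis of $\mathrm{Rad}(V)$. $\Gamma(V)$: for $i\in I=\{1,\dots,n-1\}$ the objects of type $i$ are the $i$-dimensional subspaces $U$ with $U\cap\mathrm{Rad}(V)=0$ and $\dim\mathrm{Rad}(U)\le1$; $X,Y$ are incident iff $X=Y$ or $X\subseteq Y$ with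 $X\cap\mathrm{Rad}(Y)=0$ or vice versa. A flag is a set of pairwise incident objects; a chamber is a flag containing one object of each type in $I$. *)

From HB Require Import structures.
From mathcomp Require Import all_boot all_order all_algebra.
Set Implicit Arguments. Unset Strict Implicit. Unset Printing Implicit Defensive.
Import GRing.Theory.
Local Open Scope ring_scope.
Local Open Scope vspace_scope.

Section SympGeom.
Variables (F : fieldType) (vT : vectType F) (s : vT -> vT -> F).

(* U^perp = { v | s(u,v) = 0 for all u in U }, realised as the intersection of
   the kernels of the linear forms s(b,-) for b ranging over a basis of U
   (this agrees with the pointwise definition when s is bilinear). *)
Definition sperp (U : {vspace vT}) : {vspace vT} :=
  (\bigcap_(u <- vbasis U) lker (linfun (s u : vT -> F^o)))%VS.

Definition srad (U : {vspace vT}) : {vspace vT} := (U :&: sperp U)%VS.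

Definition srank (U : {vspace vT}) : nat := (\dim U - \dim (srad U))%N.

Definition gobject (i : nat) (U : {vspace vT}) : bool :=
  [&& \dim U == i, U :&: srad fullv == 0%VS & \dim (srad U) <= 1]%N.

Definition gincident (X Y : {vspace vT}) : bool :=
  [|| X == Y, (X <= Y)%VS && (X :&: srad Y == 0%VS)
            | (Y <= X)%VS && (Y :&: srad X == 0%VS)].

Definition gchamber (C : nat -> {vspace vT}) : Prop :=
  (forall i, (0 < i < \dim (fullv : {vspace vT}))%N -> gobject i (C i)) /\
  (forall i j, (0 < i < \dim (fullv : {vspace vT}))%N ->
               (0 < j < \dim (fullv : {vspace vT}))%N -> gincident (C i) (C j)).

Definition rad_dim : nat := \dim (srad fullv).
Definition half_rank : nat := (srank fullv)./2.

(* hyperbolic basis {e_i, f_j | 1 <= i <= r+d, 1 <= j <= r} (1-based indices) *)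
Definition hyperbolic_basis (e f : nat -> vT) : Prop :=
  let r := half_rank in let d := rad_dim in
  basis_of fullv ([seq e i | i <- iota 1 (r + d)] ++ [seq f j | j <- iota 1 r]) /\
  (forall i j, (1 <= i <= r)%N -> (1 <= j <= r)%N ->
     [/\ s (e i) (e j) = 0%R, s (f i) (f j) = 0%R & s (e i) (f j) = ((i == j)%:R)%R]) /\
  basis_of (srad fullv) [seq e (r + i)%N | i <- iota 1 d].

End SympGeom.

(* h_{2i-1} = e_i, h_{2j} = f_j *)
Definition hyp_h (T : Type) (e f : nat -> T) (l : nat) : T :=
  if odd l then e (l.+1./2) else f (l./2).

Definition hyp_flag (F : fieldType) (vT : vectType F) (e f : nat -> vT) (l : nat)
  : {vspace vT} := (<< [seq hyp_h e f k | k <- iota 1 l] >>)%VS.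

(* Order a hyperbolic basis as h_1 = e_1, h_2 = f_1, h_3 = e_2, h_4 = f_2, ...  The Gram
   matrix of h_1, ..., h_n is then block diagonal with blocks [[0, 1], [-1, 0]], followed by a
   zero entry when n is odd, so the span C_l of h_1, ..., h_l has radical 0 for l even and
   <h_l> for l odd.  Hence C_l meets Rad C_m trivially whenever l < m, and the C_l form a
   chamber.  Conversely, a chamber completed by C_0 = 0 and C_n = V is spanned by such a
   sequence, chosen one vector at a time: for l even C_l is nondegenerate, and any vector of
   C_(l+1) outside C_l is projected onto the orthogonal of C_l; for l odd, C_l meets
   Rad C_(l+1) trivially, which yields z in C_(l+1) with s(h_l, z) <> 0, and z is projected
   and rescaled to pair with h_l. *)

From HB Require Import structures.
From mathcomp Require Import all_boot all_order all_algebra zify.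
Set Implicit Arguments. Unset Strict Implicit. Unset Printing Implicit Defensive.
Import GRing.Theory.
Local Open Scope ring_scope.

Variant parity_spec (l : nat) : bool -> Set :=
  | ParityEven k of l = k.*2 : parity_spec l false
  | ParityOdd k of l = k.*2.+1 : parity_spec l true.

Lemma parityP l : parity_spec l (odd l).
Proof.
have := odd_double_half l.
by case: (odd l) => /= lE; [apply: (@ParityOdd _ l./2) | apply: (@ParityEven _ l./2)]; lia.
Qed.

Lemma hyp_h_odd (T : Type) (e f : nat -> T) k : hyp_h e f k.*2.+1 = e k.+1.
Proof. by rewrite /hyp_h /= odd_double /= doubleK. Qed.

Lemma hyp_h_even (T : Type) (e f : nat -> T) k : hyp_h e f k.*2 = f k.
Proof. by rewrite /hyp_h odd_double doubleK. Qed.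

Lemma hyp_h_deinterleave (T : Type) (h : nat -> T) :
  hyp_h (fun i => h i.*2.-1) (fun j => h j.*2) =1 h.
Proof. by move=> k; case: (parityP k) => a ->; rewrite ?hyp_h_even ?hyp_h_odd. Qed.

Section PrefixSpan.
Variables (F : fieldType) (vT : vectType F).
Implicit Types (h : nat -> vT) (U : {vspace vT}) (v : vT).

Lemma capv_vline0 U v : v \notin U -> (U :&: <[v]> = 0)%VS.
Proof.
move=> vU; apply/eqP; rewrite -subv0; apply/subvP => w /memv_capP [wU /vlineP [k wE]].
rewrite memv0 wE scaler_eq0; apply/orP; left; apply: contraNT vU => k0.
by rewrite -(scalerK k0 v) -wE memvZ.
Qed.

Lemma dimv_add_vline U v : v \notin U -> \dim (U + <[v]>) = (\dim U).+1.
Proof.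
move=> vU; have v0 : v != 0 by apply: contraNneq vU => ->; rewrite mem0v.
by rewrite dimv_disjoint_sum ?capv_vline0 // dim_vline v0 addn1.
Qed.

Lemma linear_span0 (phi : {linear vT -> F^o}) (X : seq vT) :
  {in X, forall x, phi x = 0} -> {in <<X>>%VS, forall u, phi u = 0}.
Proof.
move=> X0 u uX; suff /subvP/(_ u uX) : (<<X>> <= lker (linfun phi))%VS.
  by rewrite memv_ker lfunE => /eqP.
by apply/span_subvP => x xX; rewrite memv_ker lfunE /= X0.
Qed.

Definition prefix_span h l : {vspace vT} := <<[seq h k | k <- iota 1 l]>>%VS.

Lemma prefix_span0 h : prefix_span h 0 = 0%VS.
Proof. exact: span_nil. Qed.

Lemma prefix_spanS h l : prefix_span h l.+1 = (prefix_span h l + <[h l.+1]>)%VS.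
Proof. by rewrite /prefix_span -[l.+1]addn1 iotaD map_cat span_cat span_seq1 addn1. Qed.

Lemma prefix_span_subv h i j : (i <= j)%N -> (prefix_span h i <= prefix_span h j)%VS.
Proof.
move=> /subnK <-; elim: (j - i)%N => [|k IH]; first by rewrite add0n subvv.
by rewrite addSn prefix_spanS (subv_trans IH) ?addvSl.
Qed.

Lemma hyp_flagE (e f : nat -> vT) : hyp_flag e f = prefix_span (hyp_h e f).
Proof. by []. Qed.

Lemma mem_prefix_span h k l : (0 < k <= l)%N -> h k \in prefix_span h l.
Proof. by move=> kl; apply/memv_span/map_f; rewrite mem_iota; lia. Qed.

Lemma eq_prefix_span h h' l :
  (forall k, (0 < k <= l)%N -> h k = h' k) -> prefix_span h l = prefix_span h' l.
Proof.
move=> hh'; congr <<_>>%VS; apply/eq_in_map => k.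
by rewrite mem_iota => kl; apply: hh'; lia.
Qed.

Lemma dim_prefix_spanD h l k :
  (\dim (prefix_span h (l + k)) <= \dim (prefix_span h l) + k)%N.
Proof.
elim: k => [|k IH]; first by rewrite !addn0.
rewrite addnS prefix_spanS (leq_trans (dimv_add_leqif _ _)) // dim_vline.
by have := leq_b1 (h (l + k).+1 != 0); lia.
Qed.

Lemma dim_prefix_span_le h l : (\dim (prefix_span h l) <= l)%N.
Proof. by have := dim_prefix_spanD h 0 l; rewrite prefix_span0 dimv0. Qed.

Lemma dim_prefix_span h N l :
  \dim (prefix_span h N) = N -> (l <= N)%N -> \dim (prefix_span h l) = l.
Proof.
move=> dimN lN; have := dim_prefix_spanD h l (N - l).
by rewrite subnKC // dimN; have := dim_prefix_span_le h l; lia.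
Qed.

Lemma prefix_span_notin h l :
  (0 < l)%N -> \dim (prefix_span h l) = l -> h l \notin prefix_span h l.-1.
Proof.
case: l => // l _ dimS; apply/negP => hl; move: dimS.
by rewrite prefix_spanS (addv_idPl _) -?memvE //; have := dim_prefix_span_le h l; lia.
Qed.

Lemma span_hyp_basis (e f : nat -> vT) r d : (d <= 1)%N ->
  <<[seq e i | i <- iota 1 (r + d)] ++ [seq f j | j <- iota 1 r]>>%VS =
  prefix_span (hyp_h e f) (r.*2 + d).
Proof.
move=> d1; apply/eqP; rewrite eqEsubv; apply/andP; split; apply/span_subvP => x.
  rewrite mem_cat => /orP [] /mapP [i]; rewrite mem_iota => iE ->.
    by case: i iE => // i iE; rewrite -(hyp_h_odd e f) mem_prefix_span //; lia.
  by rewrite -(hyp_h_even e f) mem_prefix_span //; lia.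
case/mapP => k; rewrite mem_iota => kE ->; apply: memv_span; rewrite mem_cat.
case: (parityP k) kE => a -> aE; [rewrite hyp_h_even orbC | rewrite hyp_h_odd];
  by rewrite map_f ?mem_iota //; lia.
Qed.

End PrefixSpan.

Section AlternatingForm.
Variables (F : fieldType) (vT : vectType F) (s : vT -> vT -> F).
Hypothesis s_linr : forall u, linear (s u : vT -> F^o).
Hypothesis s_linl : forall v, linear ((fun u => s u v) : vT -> F^o).
Hypothesis s_alt : forall x, s x x = 0.
Implicit Types (h : nat -> vT) (U W : {vspace vT}) (u v x : vT).

Let slinr u : {linear vT -> F^o} :=
  HB.pack (s u : vT -> F^o) (GRing.isLinear.Build F vT F^o _ (s u : vT -> F^o) (s_linr u)).
Let slinl v : {linear vT -> F^o} :=
  HB.pack ((fun u => s u v) : vT -> F^o)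
    (GRing.isLinear.Build F vT F^o _ ((fun u => s u v) : vT -> F^o) (s_linl v)).

Lemma sDr u v w : s u (v + w) = s u v + s u w. Proof. exact: (raddfD (slinr u)). Qed.
Lemma sBr u v w : s u (v - w) = s u v - s u w. Proof. exact: (raddfB (slinr u)). Qed.
Lemma sZr u a v : s u (a *: v) = a * s u v. Proof. exact: (linearZZ (slinr u)). Qed.
Lemma sDl u v w : s (v + w) u = s v u + s w u. Proof. exact: (raddfD (slinl u)). Qed.

Lemma s_skew u v : s v u = - s u v.
Proof.
apply/eqP; rewrite -addr_eq0; have := s_alt (u + v).
by rewrite sDl !sDr !s_alt add0r addr0 addrC => ->.
Qed.

Lemma orth_prefix_spanr h l v : (forall k, (0 < k <= l)%N -> s v (h k) = 0) ->
  forall u, u \in prefix_span h l -> s v u = 0.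
Proof.
move=> vh u; apply: (linear_span0 (phi := slinr v)) => x /mapP [k]; rewrite mem_iota => kl ->.
by apply: vh; lia.
Qed.

Lemma orth_prefix_spanl h l v : (forall k, (0 < k <= l)%N -> s (h k) v = 0) ->
  forall u, u \in prefix_span h l -> s u v = 0.
Proof.
move=> hv u; apply: (linear_span0 (phi := slinl v)) => x /mapP [k]; rewrite mem_iota => kl ->.
by apply: hv; lia.
Qed.

Lemma mem_sperp U v : (v \in sperp s U) = all (fun u => s u v == 0) (vbasis U).
Proof.
rewrite /sperp; elim: (tval (vbasis U)) => [|x X IH]; first by rewrite big_nil memvf.
by rewrite big_cons memv_cap IH memv_ker (lfunE (slinr x)).
Qed.

Lemma sperpP U v : reflect (forall u, u \in U -> s u v = 0) (v \in sperp s U).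
Proof.
rewrite mem_sperp; apply: (iffP allP) => [vU u | vU u /vbasis_mem /vU -> //].
by rewrite -(span_basis (vbasisP U)); apply: (linear_span0 (phi := slinl v)) => x /vU /eqP.
Qed.

Lemma sperpPn U v : reflect (exists2 u, u \in U & s u v != 0) (v \notin sperp s U).
Proof.
apply: (iffP idP) => [|[u uU]]; last by apply: contra => /sperpP/(_ u uU) ->.
by rewrite mem_sperp => /allPn [u /vbasis_mem]; exists u.
Qed.

Lemma sradP U v : reflect (v \in U /\ forall u, u \in U -> s u v = 0) (v \in srad s U).
Proof. by rewrite memv_cap; apply: (iffP andP) => -[vU /sperpP]. Qed.

(* Gram matrix of a hyperbolic basis listed as e_1, f_1, e_2, f_2, ... *)
Definition hyp_gram (i j : nat) : F :=
  (odd i && (j == i.+1))%:R - (odd j && (i == j.+1))%:R.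

Lemma hyp_gramC i j : hyp_gram j i = - hyp_gram i j.
Proof. by rewrite /hyp_gram opprB. Qed.

Lemma hyp_gram_eq0 i j :
  ~~ (odd i && (j == i.+1)) -> ~~ (odd j && (i == j.+1)) -> hyp_gram i j = 0.
Proof. by rewrite /hyp_gram => /negPf -> /negPf ->; rewrite subrr. Qed.

Lemma hyp_gram_odd_even a b : hyp_gram a.*2.+1 b.*2 = (a.+1 == b)%:R.
Proof.
rewrite /hyp_gram; have -> : odd a.*2.+1 && (b.*2 == a.*2.+2) = (a.+1 == b) by lia.
have -> : odd b.*2 && (a.*2.+1 == b.*2.+1) = false by lia.
exact: subr0.
Qed.

Lemma hyp_gram_pair k : hyp_gram k.*2.+1 k.*2.+2 = 1.
Proof. by rewrite -doubleS hyp_gram_odd_even eqxx mulr1n. Qed.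

Definition hyperbolic_seq h N := forall i j, (0 < i <= N)%N -> (0 < j <= N)%N ->
  s (h i) (h j) = hyp_gram i j.

Lemma hyperbolic_seqW h N M : hyperbolic_seq h N -> (M <= N)%N -> hyperbolic_seq h M.
Proof. by move=> hs MN i j iM jM; apply: hs; lia. Qed.

Lemma hyperbolic_seq_orth h N i j : hyperbolic_seq h N -> (0 < i <= N)%N -> (0 < j <= N)%N ->
  ~~ (odd i && (j == i.+1)) -> ~~ (odd j && (i == j.+1)) -> s (h i) (h j) = 0.
Proof. by move=> hs iN jN ij ji; rewrite hs ?hyp_gram_eq0. Qed.

Lemma hyperbolic_seq_pair h N k : hyperbolic_seq h N -> (k.*2.+2 <= N)%N ->
  s (h k.*2.+1) (h k.*2.+2) = 1.
Proof. by move=> hs kN; rewrite hs ?hyp_gram_pair //; lia. Qed.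

Lemma hyperbolic_seq_rcons h m v : hyperbolic_seq h m ->
  (forall b, (0 < b <= m)%N -> s (h b) v = hyp_gram b m.+1) ->
  hyperbolic_seq [eta h with m.+1 |-> v] m.+1.
Proof.
move=> hs hv i j iS jS; rewrite [LHS]/=.
case: eqP => [->|im]; case: eqP => [->|jm].
- by rewrite s_alt /hyp_gram subrr.
- by rewrite s_skew hv 1?hyp_gramC ?opprK //; lia.
- by rewrite hv //; lia.
- by rewrite hs //; lia.
Qed.

Lemma srad_prefix_span_even h k : hyperbolic_seq h k.*2 -> srad s (prefix_span h k.*2) = 0%VS.
Proof.
elim: k => [|k IH] hs; first by rewrite prefix_span0; apply/eqP; rewrite -subv0 capvSl.
rewrite doubleS in hs *; apply/eqP; rewrite -subv0; apply/subvP => v /sradP [vC vperp].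
move: vC; rewrite !prefix_spanS => /memv_addP [x /memv_addP [y yC [_ /vlineP [a ->] ->]]].
move=> [_ /vlineP [b ->] vE]; rewrite {v}vE in vperp *.
have ef : s (h k.*2.+1) (h k.*2.+2) = 1 by apply: hyperbolic_seq_pair hs _.
have [ey fy] : s (h k.*2.+1) y = 0 /\ s (h k.*2.+2) y = 0.
  by split; apply: orth_prefix_spanr yC => j jk; apply: hyperbolic_seq_orth hs _ _ _ _; lia.
have [eC fC] : h k.*2.+1 \in prefix_span h k.*2.+2 /\ h k.*2.+2 \in prefix_span h k.*2.+2.
  by split; apply: mem_prefix_span; lia.
have b0 : b = 0.
  by have := vperp _ eC; rewrite !sDr !sZr ey s_alt ef mulr0 addr0 add0r mulr1.
have a0 : a = 0.
  apply/eqP; rewrite -oppr_eq0 -mulrN1; apply/eqP.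
  by have := vperp _ fC; rewrite !sDr !sZr fy s_alt s_skew ef b0 mulr0 addr0 add0r.
subst a b; rewrite !scale0r !addr0 in vperp *.
have hs2 : hyperbolic_seq h k.*2 by apply: (hyperbolic_seqW hs); lia.
rewrite -(IH hs2); apply/sradP; split=> // u uC.
by apply: vperp; apply: subvP uC; apply: prefix_span_subv; lia.
Qed.

Lemma srad_prefix_span_odd h k : hyperbolic_seq h k.*2.+1 ->
  (srad s (prefix_span h k.*2.+1) <= <[h k.*2.+1]>)%VS.
Proof.
move=> hs; apply/subvP => v /sradP [vC vperp].
move: vC; rewrite prefix_spanS => /memv_addP [y yC [_ /vlineP [a ->] vE]].
rewrite {v}vE in vperp *.
have hs2 : hyperbolic_seq h k.*2 by apply: (hyperbolic_seqW hs).
suff : y \in srad s (prefix_span h k.*2).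
  by rewrite srad_prefix_span_even // memv0 => /eqP ->; rewrite add0r memvZ ?memv_line.
apply/sradP; split=> // u uC.
have ue : s u (h k.*2.+1) = 0.
  by apply: orth_prefix_spanl uC => j jk; apply: hyperbolic_seq_orth hs _ _ _ _; lia.
have := vperp u; rewrite sDr sZr ue mulr0 addr0; apply.
by apply: subvP uC; apply: prefix_span_subv.
Qed.

Lemma srad_prefix_span h l : hyperbolic_seq h l ->
  (srad s (prefix_span h l) <= if odd l then <[h l]> else 0)%VS.
Proof.
case: (parityP l) => k -> hs; first by rewrite srad_prefix_span_even.
exact: srad_prefix_span_odd.
Qed.

Lemma dim_srad_prefix_span h l : hyperbolic_seq h l -> (\dim (srad s (prefix_span h l)) <= 1)%N.
Proof.
move/srad_prefix_span/dimvS/leq_trans; apply.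
by case: ifP => _; rewrite ?dimv0 // dim_vline leq_b1.
Qed.

Lemma prefix_span_cap_srad h l m : hyperbolic_seq h m -> \dim (prefix_span h m) = m ->
  (l < m)%N -> (prefix_span h l :&: srad s (prefix_span h m) = 0)%VS.
Proof.
move=> hs dimm lm; apply/eqP; rewrite -subv0.
have lm1 : (l <= m.-1)%N by lia.
apply: subv_trans (capvS (prefix_span_subv h lm1) (srad_prefix_span hs)) _.
case: ifP => _; last by rewrite capv0.
by rewrite capv_vline0 // prefix_span_notin //; lia.
Qed.

Lemma prefix_span_proj h k x : hyperbolic_seq h k.*2 ->
  exists2 y, y \in prefix_span h k.*2 & forall b, (0 < b <= k.*2)%N -> s (h b) (x - y) = 0.
Proof.
elim: k => [|k IH] hs; first by exists 0 => [|b]; rewrite ?mem0v //; lia.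
have [|y yC yperp] := IH; first by apply: (hyperbolic_seqW hs); lia.
rewrite doubleS in hs *.
suff [w wC wperp] : exists2 w, w \in prefix_span h k.*2.+2 &
    forall b, (0 < b <= k.*2.+2)%N -> s (h b) (x - y - w) = 0.
  exists (y + w) => [|b /wperp]; last by rewrite opprD addrA.
  by apply: memvD wC; apply: subvP yC; apply: prefix_span_subv; lia.
move: (x - y : vT) yperp => z zperp.
have ef : s (h k.*2.+1) (h k.*2.+2) = 1 by apply: hyperbolic_seq_pair hs _.
(* s(e, a e + b f) = b and s(f, a e + b f) = -a for the new pair e, f *)
exists ((- s (h k.*2.+2) z) *: h k.*2.+1 + s (h k.*2.+1) z *: h k.*2.+2).
  by apply: memvD; apply: memvZ; apply: mem_prefix_span; lia.
move=> b bk; rewrite sBr sDr !sZr.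
have [bk2 | bE] := leqP b k.*2.
  have [be bf] : s (h b) (h k.*2.+1) = 0 /\ s (h b) (h k.*2.+2) = 0.
    by split; apply: hyperbolic_seq_orth hs _ _ _ _; lia.
  by rewrite be bf !mulr0 addr0 subr0 zperp //; lia.
have [-> | ->] : b = k.*2.+1 \/ b = k.*2.+2 by lia.
  by rewrite s_alt ef mulr0 mulr1 add0r subrr.
by rewrite s_alt (s_skew (h k.*2.+1)) ef mulrN1 mulr0 addr0 opprK subrr.
Qed.

Lemma hyperbolic_seq_extend_even h k W :
  hyperbolic_seq h k.*2 -> \dim (prefix_span h k.*2) = k.*2 ->
  (prefix_span h k.*2 <= W)%VS -> \dim W = k.*2.+1 ->
  exists2 v, v \in W & v \notin prefix_span h k.*2 /\
    forall b, (0 < b <= k.*2)%N -> s (h b) v = hyp_gram b k.*2.+1.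
Proof.
move=> hs dimC CW dimW.
have [x xW xC] : exists2 x, x \in W & x \notin prefix_span h k.*2.
  by apply/subvPn/negP => /dimvS; rewrite dimW dimC; lia.
have [y yC yperp] := prefix_span_proj x hs.
exists (x - y); first by rewrite memvB // (subvP CW).
split=> [|b bk]; last by rewrite yperp // hyp_gram_eq0 //; lia.
by apply: contra xC => xyC; rewrite -(subrK y x) memvD.
Qed.

Lemma hyperbolic_seq_extend_odd h k W :
  hyperbolic_seq h k.*2.+1 -> \dim (prefix_span h k.*2.+1) = k.*2.+1 ->
  (prefix_span h k.*2.+1 <= W)%VS -> (prefix_span h k.*2.+1 :&: srad s W = 0)%VS ->
  exists2 v, v \in W & v \notin prefix_span h k.*2.+1 /\
    forall b, (0 < b <= k.*2.+1)%N -> s (h b) v = hyp_gram b k.*2.+2.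
Proof.
move=> hs dimC CW Crad; have hs2 : hyperbolic_seq h k.*2 by apply: (hyperbolic_seqW hs).
have eC : h k.*2.+1 \in prefix_span h k.*2.+1 by apply: mem_prefix_span; lia.
have e0 : h k.*2.+1 != 0.
  by apply: contraNneq (prefix_span_notin _ dimC) => // ->; rewrite mem0v.
have [z zW ez] : exists2 z, z \in W & s (h k.*2.+1) z != 0.
  have : h k.*2.+1 \notin sperp s W.
    by apply: contra e0 => eW; rewrite -memv0 -Crad memv_cap eC memv_cap (subvP CW).
  by case/sperpPn => z zW; rewrite s_skew oppr_eq0; exists z.
have [y yC yperp] := prefix_span_proj z hs2.
have ey : s (h k.*2.+1) y = 0.
  by apply: orth_prefix_spanr yC => j jk; apply: hyperbolic_seq_orth hs _ _ _ _; lia.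
set c := s (h k.*2.+1) (z - y); have c0 : c != 0 by rewrite /c sBr ey subr0.
have hv b : (0 < b <= k.*2.+1)%N -> s (h b) (c^-1 *: (z - y)) = hyp_gram b k.*2.+2.
  move=> bk; rewrite sZr; have [bk2|bE] := leqP b k.*2.
    by rewrite yperp ?mulr0 ?hyp_gram_eq0 //; lia.
  have -> : b = k.*2.+1 by lia.
  by rewrite -/c mulVf // hyp_gram_pair.
exists (c^-1 *: (z - y)).
  by rewrite memvZ // memvB // (subvP CW) // (subvP (prefix_span_subv h _) _ yC).
split=> //; apply/negP => vC.
have ev : s (h k.*2.+1) (c^-1 *: (z - y)) = 0.
  by apply: orth_prefix_spanr vC => j jk; apply: hyperbolic_seq_orth hs _ _ _ _; lia.
by have := hv k.*2.+1; rewrite ev hyp_gram_pair leqnn => /(_ isT)/eqP; rewrite eq_sym oner_eq0.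
Qed.

Lemma hyperbolic_seq_extend h m W :
  hyperbolic_seq h m -> \dim (prefix_span h m) = m ->
  (prefix_span h m <= W)%VS -> \dim W = m.+1 ->
  (odd m -> prefix_span h m :&: srad s W = 0)%VS ->
  exists2 v, W = (prefix_span h m + <[v]>)%VS &
    forall b, (0 < b <= m)%N -> s (h b) v = hyp_gram b m.+1.
Proof.
move=> hs dimC CW dimW Crad.
suff [v vW [vC vperp]] : exists2 v, v \in W & v \notin prefix_span h m /\
    forall b, (0 < b <= m)%N -> s (h b) v = hyp_gram b m.+1.
  exists v => //; apply/eqP; rewrite eq_sym eqEdim subv_add CW -memvE vW /=.
  by rewrite dimv_add_vline // dimW dimC.
case: (parityP m) hs dimC CW dimW Crad => k -> hs dimC CW dimW Crad.
  exact: hyperbolic_seq_extend_even.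
exact: hyperbolic_seq_extend_odd (Crad isT).
Qed.

Lemma flag_hyperbolic_seq N (D : nat -> {vspace vT}) :
  (forall l, (l < N)%N -> (D l <= D l.+1)%VS) ->
  (forall l, (l <= N)%N -> \dim (D l) = l) ->
  (forall l, (l < N)%N -> odd l -> (D l :&: srad s (D l.+1) = 0)%VS) ->
  exists h, hyperbolic_seq h N /\ forall l, (l <= N)%N -> D l = prefix_span h l.
Proof.
move=> Dmono Ddim Drad; elim: N => [|m IH] in Dmono Ddim Drad *.
  exists (fun=> 0); split=> [i j /andP [] | l]; first lia.
  by rewrite leqn0 => /eqP ->; apply/eqP; rewrite prefix_span0 -dimv_eq0 Ddim.
have [l /ltnW /Dmono // | l /leqW /Ddim // | l /ltnW /Drad // | h [hs DC]] := IH.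
have dimC : \dim (prefix_span h m) = m by rewrite -DC ?Ddim.
have [||| v DS hv] := hyperbolic_seq_extend (W := D m.+1) hs dimC.
- by rewrite -DC //; apply: Dmono.
- exact: Ddim.
- by rewrite -DC //; apply: Drad.
exists [eta h with m.+1 |-> v]; split; first exact: hyperbolic_seq_rcons.
have DC' l : (l <= m)%N -> D l = prefix_span [eta h with m.+1 |-> v] l.
  by move=> lm; rewrite DC //; apply: eq_prefix_span => k km /=; rewrite ifN //; lia.
move=> l; rewrite leq_eqVlt ltnS => /orP [/eqP -> | lm]; last exact: DC'.
by rewrite prefix_spanS -DC' //= eqxx DS DC.
Qed.

Local Notation n := (\dim (fullv : {vspace vT})).

Lemma gincident_lt U W : (\dim U < \dim W)%N -> gincident s U W ->
  (U <= W)%VS && (U :&: srad s W == 0)%VS.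
Proof.
move=> UW /or3P [/eqP UWE | // | /andP [/dimvS WU _]]; last lia.
by rewrite UWE ltnn in UW.
Qed.

Lemma srad_fullv_hyperbolic h : hyperbolic_seq h n -> prefix_span h n = fullv ->
  srad s fullv = if odd n then <[h n]>%VS else 0%VS.
Proof.
move=> hs hfull; apply/eqP; rewrite eqEsubv -{1}hfull srad_prefix_span //=.
case: ifP => nodd; last exact: sub0v.
rewrite -memvE; apply/sradP; split=> [|u _]; first exact: memvf.
have : u \in prefix_span h n by rewrite hfull memvf.
by apply: orth_prefix_spanl => j jn; apply: hyperbolic_seq_orth hs _ _ _ _; lia.
Qed.

Lemma hyperbolic_seq_chamber h : hyperbolic_seq h n -> prefix_span h n = fullv ->
  gchamber s (prefix_span h).
Proof.
move=> hs hfull.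
have dimC l : (l <= n)%N -> \dim (prefix_span h l) = l by apply: dim_prefix_span; rewrite hfull.
have capC l m : (l < m)%N -> (m <= n)%N ->
    (prefix_span h l :&: srad s (prefix_span h m) == 0)%VS.
  move=> lm mn; rewrite prefix_span_cap_srad ?eqxx ?dimC //.
  exact: hyperbolic_seqW hs mn.
split=> [l /andP [_ ln] | i j /andP [_ /ltnW ilt] /andP [_ /ltnW jlt]].
  rewrite /gobject; have -> : srad s fullv = srad s (prefix_span h n) by rewrite hfull.
  rewrite dimC ?(ltnW ln) // eqxx capC // dim_srad_prefix_span //.
  exact: hyperbolic_seqW hs (ltnW ln).
rewrite /gincident; case: (ltngtP i j) => [ij | ji | ->]; last by rewrite eqxx.
  by apply/or3P/Or32; rewrite capC // andbT prefix_span_subv // ltnW.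
by apply/or3P/Or33; rewrite capC // andbT prefix_span_subv // ltnW.
Qed.

Lemma hyperbolic_basis_seq e f : (\dim (srad s fullv) <= 1)%N -> hyperbolic_basis s e f ->
  hyperbolic_seq (hyp_h e f) n /\ prefix_span (hyp_h e f) n = fullv.
Proof.
move=> d1 [eB [hp hrad]]; have {d1} : (rad_dim s <= 1)%N := d1.
set r := half_rank s in eB hp hrad *; set d := rad_dim s in eB hrad * => d1.
have nE : n = (r.*2 + d)%N.
  by case/andP: eB => /eqP <- /eqP ->; rewrite size_cat !size_map !size_iota; lia.
rewrite nE; split; last by rewrite -span_hyp_basis // (span_basis eB).
have erad i x : (r < i <= r + d)%N -> s x (e i) = 0.
  move=> ri; have : e i \in srad s fullv.
    rewrite -(span_basis hrad); apply/memv_span/mapP; exists (i - r)%N.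
      by rewrite mem_iota; lia.
    by rewrite subnKC //; lia.
  by case/sradP => _; apply; rewrite memvf.
have see i j : (0 < i <= r + d)%N -> (0 < j <= r + d)%N -> s (e i) (e j) = 0.
  move=> ird jrd; have [jr|rj] := leqP j r; last by apply: erad; lia.
  have [ir|ri] := leqP i r; first by case: (hp i j ltac:(lia) ltac:(lia)).
  by rewrite s_skew erad ?oppr0 //; lia.
have sef i j : (0 < i <= r + d)%N -> (0 < j <= r)%N -> s (e i) (f j) = (i == j)%:R.
  move=> ird jr; have [ir|ri] := leqP i r; first by case: (hp i j ltac:(lia) ltac:(lia)).
  have -> : (i == j) = false by lia.
  by rewrite s_skew erad ?oppr0 //; lia.
have sff i j : (0 < i <= r)%N -> (0 < j <= r)%N -> s (f i) (f j) = 0.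
  by move=> ir jr; case: (hp i j ir jr).
move=> i j iS jS; case: (parityP i) iS => a -> aS; case: (parityP j) jS => b -> bS.
- by rewrite !hyp_h_even sff ?hyp_gram_eq0 //; lia.
- by rewrite hyp_h_even hyp_h_odd s_skew sef 1?hyp_gramC ?hyp_gram_odd_even //; lia.
- by rewrite hyp_h_odd hyp_h_even sef ?hyp_gram_odd_even //; lia.
- by rewrite !hyp_h_odd see ?hyp_gram_eq0 //; lia.
Qed.

Lemma hyperbolic_seq_basis h : hyperbolic_seq h n -> prefix_span h n = fullv ->
  hyperbolic_basis s (fun i => h i.*2.-1) (fun j => h j.*2).
Proof.
move=> hs hfull; have dimn : \dim (prefix_span h n) = n by rewrite hfull.
have hn0 : odd n -> h n != 0.
  by move=> /odd_gt0 n0; apply: contraNneq (prefix_span_notin n0 dimn) => ->; rewrite mem0v.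
have radE := srad_fullv_hyperbolic hs hfull.
have dE : rad_dim s = odd n.
  by rewrite /rad_dim radE; case: ifP => [/hn0 hn|_]; rewrite ?dimv0 // dim_vline hn.
have rE : half_rank s = n./2.
  by rewrite /half_rank /srank -/(rad_dim s) dE; have := odd_double_half n; lia.
have nE : (n./2.*2 + odd n)%N = n by rewrite addnC odd_double_half.
rewrite /hyperbolic_basis rE dE; split; [|split].
- rewrite basisEdim span_hyp_basis ?leq_b1 // nE size_cat !size_map !size_iota.
  rewrite (eq_prefix_span (h' := h)) => [|k _]; last exact: hyp_h_deinterleave.
  by rewrite hfull subvv /=; have := odd_double_half n; lia.
- move=> i j /andP [i0 ir] /andP [j0 jr].
  case: i i0 ir => // i _ ir; case: j j0 jr => // j _ jr; rewrite !doubleS !succnK.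
  split.
  + by rewrite hs ?hyp_gram_eq0 //; lia.
  + by rewrite hs ?hyp_gram_eq0 //; lia.
  + by rewrite hs -?doubleS ?hyp_gram_odd_even //; lia.
- rewrite radE; case: ifP => nodd; rewrite basisEdim ?sub0v ?size_map ?size_iota //.
  have -> : [seq h (n./2 + i).*2.-1 | i <- iota 1 true] = [:: h n].
    by rewrite /=; congr [:: h _]; lia.
  by rewrite span_seq1 subvv dim_vline hn0.
Qed.

Lemma chamber_hyperbolic_seq C : gchamber s C ->
  exists h, [/\ hyperbolic_seq h n, prefix_span h n = fullv &
    forall l, (0 < l < n)%N -> C l = prefix_span h l].
Proof.
move=> [Cobj Cinc]; have dimC l : (0 < l < n)%N -> \dim (C l) = l by move/Cobj/and3P => [/eqP].
pose D l := if l == n then fullv else if l == 0%N then 0%VS else C l.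
have DE l : (0 < l < n)%N -> D l = C l by move=> ln; rewrite /D !ifN //; lia.
have dimD l : (l <= n)%N -> \dim (D l) = l.
  rewrite /D; case: eqP => [-> //| ln lle]; case: eqP => [-> | l0]; first exact: dimv0.
  by apply: dimC; lia.
have D0 : D 0%N = 0%VS by apply/eqP; rewrite -dimv_eq0 dimD.
have incD l : (0 < l)%N -> (l < n)%N -> (D l <= D l.+1)%VS && (D l :&: srad s (D l.+1) == 0)%VS.
  move=> l0 ln; have lS : (0 < l < n)%N by rewrite l0.
  rewrite DE // /D /=; case: eqP => [_ | lSn]; first by case/and3P: (Cobj l lS); rewrite subvf.
  by apply: gincident_lt; [rewrite !dimC | apply: Cinc]; lia.
have [h [hs DC]] : exists h, hyperbolic_seq h n /\ forall l, (l <= n)%N -> D l = prefix_span h l.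
  apply: flag_hyperbolic_seq dimD _ => l ln.
    by have [->|/incD/(_ ln)/andP []] := posnP l; rewrite ?D0 ?sub0v.
  by move=> /odd_gt0 /incD /(_ ln) /andP [_ /eqP].
exists h; split=> //; first by rewrite -DC // /D eqxx.
by move=> l ln; rewrite -DE // DC //; lia.
Qed.

End AlternatingForm.

Theorem corollary3p1 (F : fieldType) (vT : vectType F) (s : vT -> vT -> F)
  (s_linr : forall u, linear (s u : vT -> F^o))
  (s_linl : forall v, linear ((fun u => s u v) : vT -> F^o))
  (s_alt : forall x, s x x = 0)
  (s_maxrank : (\dim (srad s fullv) <= 1)%N) :
  (forall e f : nat -> vT, hyperbolic_basis s e f -> gchamber s (hyp_flag e f)) /\
  (forall C : nat -> {vspace vT}, gchamber s C ->
     exists e f : nat -> vT, hyperbolic_basis s e f /\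
       forall l, (0 < l < \dim (fullv : {vspace vT}))%N -> C l = hyp_flag e f l).
Proof.
split=> [e f eB | C CC].
  rewrite hyp_flagE; have [hs hfull] := hyperbolic_basis_seq s_linr s_linl s_alt s_maxrank eB.
  exact: (hyperbolic_seq_chamber s_linr s_linl s_alt hs hfull).
have [h [hs hfull hC]] := chamber_hyperbolic_seq s_linr s_linl s_alt CC.
exists (fun i => h i.*2.-1), (fun j => h j.*2); split.
  exact: (hyperbolic_seq_basis s_linr s_linl s_alt hs hfull).
by move=> l /hC ->; rewrite hyp_flagE; apply: eq_prefix_span => k _; rewrite hyp_h_deinterleave.
Qed.
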